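(* Let $r\geq0$ be an integer and $T\in\overline{\mathrm{Sub}}(X,1)$ with $T\subset B(1,r)$. Let $T_1,T_2\in\mathcal{R}_{r+1}$ with $T_1\cap T_2=T$. Let $(\Delta_1,\tau_1),(\Delta_2,\tau_2)$ be $R_N$-core graphs and $v_i\in V(\Delta_i)$. If there are based occurrences $f_i\colon(T_i,1)\to(\Delta_i,v_i)$ ($i=1,2$), then the connected component $\Gamma$ of $\Delta_1\times_{R_N}\Delta_2$ containing $(v_1,v_2)$ is $R_N$-graph isomorphic to $T$ (via $x\mapsto(f_1(x),f_2(x))$); in particular $\Gamma$ is contractible.
   Context: $N\ge2$, $F_N$ free with free basis $A$, $X$ its Cayley graph (a tree with vertex set $F_N$, unit edge lengths, metric $d_X$), $B(1,r)=\{x\in X:d_X(1,x)\le r\}$, $R_N=F_N\backslash X$ the rose, $q\colon X\to R_N$ the projection. An $R_N$-graph is a graph with a graph morphism $\tau$ to $R_N$ (edges labeled by $A$ and oriented); $R_N$-graph morphisms commute with the maps to $R_N$. An $R_N$-core graph is a finite $R_N$-graph with $\tau$ locally injective and no vertices of degree $0$ or $1$. Subtrees of $X$ are $R_N$-graphs via $q$. $\overline{\mathrm{Sub}}(X,1)$: finite subtrees of $X$ containing $1$ (including $\{1\}$). For $r\ge1$, $\mathcal{R}_r$: finite subtrees $T'\ni1$ in which $1$ has degree $\geq2$ and every degree-one vertex lies at distance exactly $r$ from $1$. A based occurrence $(T',1)\to(\Delta,v)$ of a finite subtree $T'$ is an $R_N$-graph morphism sending $1\mapsto v$ and preserving the degree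 of every vertex of $T'$ of degree $\ge2$. The fiber product $\Delta_1\times_{R_N}\Delta_2$ has vertex set $V(\Delta_1)\times V(\Delta_2)$ and, for each pair of edges $e_1,e_2$ with the same label $a$ (oriented compatibly), an edge labeled $a$ from $(o(e_1),o(e_2))$ to $(t(e_1),t(e_2))$. *)

From mathcomp Require Import all_boot.
Set Implicit Arguments. Unset Strict Implicit. Unset Printing Implicit Defensive.

(* Free basis A = 'I_N.  A letter of A^{+-1}: (a, true) = a, (a, false) = a^-1. *)
Definition letter (N : nat) := ('I_N * bool)%type.
Definition linv N (x : letter N) : letter N := (x.1, ~~ x.2).

(* Elements of F_N = vertices of the Cayley tree X: reduced words. *)
Definition word N := seq (letter N).
Definition reduced N (w : word N) : bool := sorted (fun x y => y != linv x) w.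

Definition rmul N (w : word N) (x : letter N) : word N :=
  if (0 < size w) && (nth x w (size w).-1 == linv x)
  then take (size w).-1 w else rcons w x.

Definition adjX N (g h : word N) : bool := [exists x : letter N, h == rmul g x].

(* A finite subtree of X containing 1, given by its (finite) vertex set
   (subtrees of a tree are the induced subgraphs on connected vertex sets). *)
Definition subtree1 N (T : seq (word N)) : Prop :=
  [/\ [::] \in T, all (@reduced N) T &
      forall w, w \in T ->
        exists p : seq (word N), [/\ path (@adjX N) [::] p, last [::] p = w
                                   & all (fun u => u \in T) p]].

Definition tedge N (T : seq (word N)) (a : 'I_N) (g h : word N) : bool :=
  [&& g \in T, h \in T & h == rmul g (a, true)].

Definition tdeg N (T : seq (word N)) (g : word N) : nat :=
  #|[set x : letter N | rmul g x \in T]|.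

Definition Rr N (r : nat) (T : seq (word N)) : Prop :=
  [/\ subtree1 T, 2 <= tdeg T [::] &
      forall w, w \in T -> tdeg T w = 1 -> size w = r].

(* A finite R_N-graph with locally injective labelling: a finite vertex type V
   and, for each a in A, the relation e a u w = "there is an edge u --a--> w".
   Local injectivity means at most one outgoing and one incoming a-edge at
   each vertex, so edges are determined by these relations. *)
Definition locinj N (V : finType) (e : 'I_N -> rel V) : Prop :=
  forall a, (forall u w w', e a u w -> e a u w' -> w = w') /\
            (forall u u' w, e a u w -> e a u' w -> u = u').

(* degree of a vertex (loops count twice) *)
Definition gdeg N (V : finType) (e : 'I_N -> rel V) (v : V) : nat :=
  #|[set a | [exists w, e a v w]]| + #|[set a | [exists u, e a u v]]|.

Definition core_graph N (V : finType) (e : 'I_N -> rel V) : Prop :=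
  locinj e /\ forall v, 2 <= gdeg e v.

Definition based_occ N (T : seq (word N)) (V : finType) (e : 'I_N -> rel V)
    (v : V) (f : word N -> V) : Prop :=
  [/\ f [::] = v,
      forall a g h, tedge T a g h -> e a (f g) (f h) &
      forall g, g \in T -> 2 <= tdeg T g -> gdeg e (f g) = tdeg T g].

Definition prod_edge N (V1 V2 : finType) (e1 : 'I_N -> rel V1)
    (e2 : 'I_N -> rel V2) (a : 'I_N) : rel (V1 * V2) :=
  fun p q => e1 a p.1 q.1 && e2 a p.2 q.2.

Definition prod_adj N (V1 V2 : finType) (e1 : 'I_N -> rel V1)
    (e2 : 'I_N -> rel V2) : rel (V1 * V2) :=
  fun p q => [exists a, prod_edge e1 e2 a p q || prod_edge e1 e2 a q p].

From mathcomp Require Import all_boot zify.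
Set Implicit Arguments. Unset Strict Implicit. Unset Printing Implicit Defensive.

(* Every vertex [x] of [T] lies within distance [r] of [1], hence is interior
   in both [T_i]; there the degree condition of a based occurrence makes [f_i]
   a bijection between the edges of [T_i] at [x] and the edges of [Delta_i] at
   [f_i x].  So the edges of the fibre product at [(f1 x, f2 x)] are exactly
   the images of the edges of [T] at [x], and the component of [(v1, v2)] is
   the image of [T].  For injectivity, [F = (f1, f2)] transports along [T]:
   if [F u = F w], every labelled path from [u] inside [T] can be followed
   from [w].  Moving a coincidence [F x = F y] to the root, the set of
   [w \in T] with [F w = F 1] is closed under [w |-> w^2]; since [|w^2| > |w|]
   for [w <> 1] in a free group, finiteness of [T] forces it to be [{1}]. *)

Section FreeWords.

Variable N : nat.
Implicit Types (x y : letter N) (u w s : word N).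

Lemma linvK : involutive (@linv N).
Proof. by case=> a b; rewrite /linv /= negbK. Qed.

Lemma linv_neq x : linv x != x.
Proof. by case: x => a []; rewrite /linv xpair_eqE eqxx. Qed.

Lemma rmul_rcons_inv s x : rmul (rcons s x) (linv x) = s.
Proof.
rewrite /rmul size_rcons /= nth_rcons ltnn eqxx linvK eqxx /=.
by rewrite -cats1 takel_cat // take_size.
Qed.

Lemma rmul_rcons_other s x y : y != linv x -> rmul (rcons s x) y = rcons (rcons s x) y.
Proof.
move=> hy; rewrite /rmul size_rcons /= nth_rcons ltnn eqxx.
by case: eqP => // hx; case/eqP: hy; rewrite hx linvK.
Qed.

Lemma rmul_cases w x : rmul w x = rcons w x \/ w = rcons (rmul w x) (linv x).
Proof.
case/lastP: w => [|s y]; first by left.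
have [->|hx] := eqVneq x (linv y); last by left; apply: rmul_rcons_other.
by right; rewrite rmul_rcons_inv linvK.
Qed.

Lemma reduced_rcons s x :
  reduced (rcons s x) = reduced s && ((s == [::]) || (x != linv (last x s))).
Proof. by case: s => [|y s] //=; rewrite rcons_path andbC. Qed.

Lemma rmul_rcons w x : reduced (rcons w x) -> rmul w x = rcons w x.
Proof.
case/lastP: w => [|s y] //; rewrite reduced_rcons last_rcons.
by case/andP=> _ /orP[|/rmul_rcons_other //]; case: s.
Qed.

Lemma rmul_reduced w x : reduced w -> reduced (rmul w x).
Proof.
case/lastP: w => [|s y] // hr.
have [->|hx] := eqVneq x (linv y).
  by rewrite rmul_rcons_inv; move: hr; rewrite reduced_rcons => /andP[].
by rewrite rmul_rcons_other // reduced_rcons hr last_rcons hx orbT.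
Qed.

Lemma rmulK w x : reduced w -> rmul (rmul w x) (linv x) = w.
Proof.
case/lastP: w => [|s y] hr; first by rewrite (rmul_rcons_inv [::]).
have [->|hx] := eqVneq x (linv y); last first.
  by rewrite rmul_rcons_other // rmul_rcons_inv.
by rewrite rmul_rcons_inv linvK rmul_rcons.
Qed.

Lemma rmulK_inv w a : reduced w -> rmul (rmul w (a, false)) (a, true) = w.
Proof. exact: (rmulK (a, false)). Qed.

Definition walk u s := foldl (@rmul N) u s.

Definition winv s := rev (map (@linv N) s).

Lemma winvK : involutive winv.
Proof. by move=> s; rewrite /winv map_rev revK -map_comp (eq_map linvK) map_id. Qed.

Lemma winv_cons x s : winv (x :: s) = rcons (winv s) (linv x).
Proof. by rewrite /winv /= rev_cons. Qed.

Lemma size_winv s : size (winv s) = size s.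
Proof. by rewrite size_rev size_map. Qed.

Lemma walk_winv u s : reduced u -> walk (walk u s) (winv s) = u.
Proof.
elim: s u => [|x s IH] u hu //=.
by rewrite winv_cons /walk foldl_rcons -/(walk _ _) IH ?rmulK ?rmul_reduced.
Qed.

Lemma walk_cat u s : reduced (u ++ s) -> walk u s = u ++ s.
Proof.
elim: s u => [|x s IH] u /=; first by rewrite cats0.
move=> hr; have hux : reduced (rcons u x) by move: hr; rewrite -cat_rcons => /cat_sorted2[].
by rewrite rmul_rcons // IH cat_rcons.
Qed.

Lemma walk_nil w : reduced w -> walk [::] w = w.
Proof. exact: (@walk_cat [::]). Qed.

Lemma reduced_take w k : reduced w -> reduced (take k w).
Proof. by rewrite -{1}(cat_take_drop k w) => /cat_sorted2[]. Qed.

Lemma walk_cat_winv u s : reduced (u ++ s) -> walk (u ++ s) (winv s) = u.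
Proof.
move=> hr; have [hu _] := cat_sorted2 hr.
by rewrite -(walk_cat hr) walk_winv.
Qed.

Lemma reduced_glue u s w : s != [::] -> reduced (u ++ s) -> reduced (s ++ w) ->
  reduced (u ++ s ++ w).
Proof.
case: s => [|x s] // _; rewrite /reduced /= !sorted_cat_cons.
by case/andP=> -> _.
Qed.

Lemma reduced_conjugate_form w : reduced w -> w != [::] ->
  exists a c, [/\ w = a ++ c ++ winv a, c != [::] & reduced (c ++ c)].
Proof.
have [n] := ubnP (size w); elim: n w => // n IHn [|x s] //= hsz hr _.
case/lastP: s hsz hr => [|m y] hsz hr.
  by exists [::], [:: x]; rewrite /reduced /= andbT eq_sym linv_neq.
have [eyx|nyx] := eqVneq y (linv x); last first.
  exists [::], (x :: rcons m y); split; rewrite ?cats0 //.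
  rewrite /reduced sorted_cat_cons -/(reduced _) reduced_rcons /= last_rcons.
  by rewrite -(inv_eq linvK) eq_sym nyx hr.
have hm : reduced m.
  move: hr; rewrite /reduced /= => /path_sorted.
  by rewrite -/(reduced _) reduced_rcons => /andP[].
case: m hm hsz hr eyx => [|z m] hm hsz hr eyx.
  by move: hr; rewrite /reduced /= eyx eqxx.
have [|a [c [-> hc hcc]]] := IHn (z :: m) _ hm isT; first by rewrite /= size_rcons in hsz *; lia.
by exists (x :: a), c; rewrite winv_cons eyx /= !rcons_cat.
Qed.

Lemma size_walk_square w : reduced w -> w != [::] -> size w < size (walk w w).
Proof.
move=> hr /(reduced_conjugate_form hr) [a [c [ew hc hcc]]].
have hac : reduced (a ++ c) by move: hr; rewrite ew catA => /cat_sorted2[].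
have hca : reduced (c ++ winv a) by move: hr; rewrite ew => /cat_sorted2[].
have hr2 : reduced ((a ++ c) ++ c ++ winv a) by rewrite -catA !reduced_glue.
have wa : walk w a = a ++ c.
  by rewrite -{1}(winvK a) ew catA walk_cat_winv // -catA -ew.
rewrite {3}ew /walk foldl_cat -!/(walk _ _) wa walk_cat // ew !size_cat size_winv.
by case: c hc {hcc hac hca hr2 wa ew} => //= *; lia.
Qed.

End FreeWords.

Definition transports N (T : seq (word N)) (X : Type) (F : word N -> X) :=
  forall u w x, u \in T -> w \in T -> F u = F w -> rmul u x \in T ->
    rmul w x \in T /\ F (rmul u x) = F (rmul w x).

Section Transport.

Variables (N : nat) (T : seq (word N)) (X : Type) (F : word N -> X).
Implicit Types (u w : word N).
Hypothesis T_reduced : forall t, t \in T -> reduced t.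
Hypothesis T_take : forall t k, t \in T -> take k t \in T.
Hypothesis F_transports : transports T F.

Lemma transports_walk u w s : u \in T -> w \in T -> F u = F w ->
  (forall k, walk u (take k s) \in T) ->
  walk w s \in T /\ F (walk u s) = F (walk w s).
Proof.
elim: s u w => [|x s IH] u w uT wT eF hs //=.
have uxT : rmul u x \in T by have := hs 1; rewrite /= take0.
have [wxT eFx] := F_transports uT wT eF uxT.
by apply: IH => // k; apply: (hs k.+1).
Qed.

Lemma transports_square w : w \in T -> F w = F [::] ->
  walk w w \in T /\ F (walk w w) = F [::].
Proof.
move=> wT eF; have nilT : [::] \in T by rewrite -(take0 w) T_take.
have [|wwT eFw] := transports_walk nilT wT (esym eF) (s := w).
  by move=> k; rewrite walk_nil ?reduced_take ?T_take ?T_reduced.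
by rewrite -eFw walk_nil ?T_reduced.
Qed.

Lemma transports_root w : w \in T -> F w = F [::] -> w = [::].
Proof.
move=> wT eF; apply/eqP; apply: contraT => nw.
have grow k : exists2 v, v \in T & F v = F [::] /\ k < size v.
  elim: k => [|k [v vT [eFv kv]]]; first by exists w; rewrite // lt0n size_eq0.
  have [vvT eFvv] := transports_square vT eFv.
  exists (walk v v) => //; split => //.
  have vn : v != [::] by rewrite -size_eq0 -lt0n (leq_ltn_trans _ kv).
  exact: leq_ltn_trans kv (size_walk_square (T_reduced vT) vn).
have [v vT [_]] := grow (\max_(t <- T) size t).
by rewrite ltnNge (leq_bigmax_seq _ vT).
Qed.

Lemma transports_inj : {in T &, injective F}.
Proof.
move=> x y xT yT eF.
have unwind k : walk x (take k (winv x)) \in T.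
  rewrite /winv take_rev size_map -map_drop -/(winv _).
  rewrite -{1}(cat_take_drop (size x - k) x) walk_cat_winv ?cat_take_drop ?T_reduced //.
  exact: T_take.
have [y'T eF'] := transports_walk xT yT eF unwind.
have y'0 : walk y (winv x) = [::].
  apply: (transports_root y'T); rewrite -eF' -{1}(cat0s x) walk_cat_winv //; exact: T_reduced.
by rewrite -(walk_winv (winv x) (T_reduced yT)) y'0 winvK walk_nil ?T_reduced.
Qed.

End Transport.

Section Subtrees.

Variable N : nat.
Implicit Types (T : seq (word N)) (s t w : word N) (x : letter N).

Lemma take_rmul_mem T s x : (forall k, take k s \in T) -> rmul s x \in T ->
  forall k, take k (rmul s x) \in T.
Proof.
move=> hs hsx k; have [e|e] := rmul_cases s x.
  rewrite e -cats1 take_cat; case: ltnP => _; first exact: hs.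
  case: (k - size s) => [|j]; first by rewrite cats0 -{1}(take_size s) hs.
  by rewrite /= cats1 -e.
case: (leqP k (size (rmul s x))) => hk; last by rewrite take_oversize ?(ltnW hk).
by rewrite -(takel_cat [:: linv x] hk) cats1 -e hs.
Qed.

Lemma subtree1_take T t k : subtree1 T -> t \in T -> take k t \in T.
Proof.
case=> nilT _ hpath /hpath [p [pp <- pT]].
elim: p [::] (fun j => nilT : take j [::] \in T) pp pT k => [|h p IH] s hs /=.
  by move=> *; apply: hs.
rewrite {1}/adjX => /andP [/existsP [x /eqP ->] pp] /andP [hT pT].
exact: IH (take_rmul_mem hs hT) pp pT.
Qed.

Lemma subtree1_reduced T t : subtree1 T -> t \in T -> reduced t.
Proof. by case=> _ /allP h _ /h. Qed.

Lemma card_letter_split (P : pred (letter N)) :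
  #|[set l | P l]| = #|[set a | P (a, true)]| + #|[set a | P (a, false)]|.
Proof.
rewrite !cardsE -!sum1_card.
rewrite (eq_bigl (fun l => P (l.1, l.2))); last by case.
rewrite -(pair_big_dep xpredT (fun a b => P (a, b)) (fun _ _ => 1%N)) /=.
rewrite [in RHS]big_mkcond [X in _ + X]big_mkcond -big_split /=.
by apply: eq_bigr => a _; rewrite big_mkcond big_bool.
Qed.

Lemma Rr_tdeg_gt1 r T w : Rr r.+1 T -> w \in T -> size w <= r -> 1 < tdeg T w.
Proof.
case=> hsub hroot hleaf; case/lastP: w => [|p a] // wT hw.
have : 0 < tdeg T (rcons p a).
  rewrite /tdeg card_gt0; apply/set0Pn; exists (linv a); rewrite inE rmul_rcons_inv.
  by rewrite -[p](take_size_cat [:: a] (erefl _)) cats1 subtree1_take.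
case E: tdeg => [|[|k]] // _.
by move: hw; rewrite (hleaf _ wT E) ltnn.
Qed.

(* Tree edges at [w] inject into graph edges at [f w]; the degree condition
   makes this injection onto. *)
Lemma occ_edges_in_tree r T (V : finType) (e : 'I_N -> rel V) v f w :
  Rr r.+1 T -> based_occ T e v f -> w \in T -> size w <= r ->
  (forall a z, e a (f w) z -> rmul w (a, true) \in T) /\
  (forall a z, e a z (f w) -> rmul w (a, false) \in T).
Proof.
move=> hR [_ hfe hfd] wT hw; have [hsub _ _] := hR.
have deg_eq := hfd w wT (Rr_tdeg_gt1 hR wT hw).
pose Ot := [set a | rmul w (a, true) \in T].
pose It := [set a | rmul w (a, false) \in T].
pose Od := [set a | [exists z, e a (f w) z]].
pose Id := [set a | [exists z, e a z (f w)]].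
have sO : Ot \subset Od.
  apply/subsetP => a; rewrite !inE => ha; apply/existsP; exists (f (rmul w (a, true))).
  by apply: hfe; rewrite /tedge wT ha eqxx.
have sI : It \subset Id.
  apply/subsetP => a; rewrite !inE => ha; apply/existsP; exists (f (rmul w (a, false))).
  apply: hfe; rewrite /tedge wT ha /=.
  by rewrite rmulK_inv ?(subtree1_reduced hsub).
have card_eq : #|Od| + #|Id| = #|Ot| + #|It|.
  by rewrite -(card_letter_split (fun l => rmul w l \in T)); exact: deg_eq.
have eO : Ot = Od.
  by apply/eqP; rewrite eqEcard sO -(leq_add2r #|Id|) card_eq leq_add2l subset_leq_card.
have eI : It = Id.
  by apply/eqP; rewrite eqEcard sI -(leq_add2l #|Od|) card_eq leq_add2r subset_leq_card.
split=> a z h.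
  have : a \in Ot by rewrite eO inE; apply/existsP; exists z.
  by rewrite inE.
have : a \in It by rewrite eI inE; apply/existsP; exists z.
by rewrite inE.
Qed.

End Subtrees.

Lemma prod_adj_sym N (V1 V2 : finType) (e1 : 'I_N -> rel V1) (e2 : 'I_N -> rel V2) :
  symmetric (prod_adj e1 e2).
Proof. by move=> p q; apply/existsP/existsP => -[a h]; exists a; rewrite orbC. Qed.

Section FiberProductComponent.

Variables (N r : nat) (T T1 T2 : seq (word N)).
Hypotheses (hT : subtree1 T) (hTr : forall w, w \in T -> size w <= r).
Hypotheses (hT1 : Rr r.+1 T1) (hT2 : Rr r.+1 T2).
Hypothesis hcap : forall w, (w \in T) = (w \in T1) && (w \in T2).
Variables (V1 V2 : finType) (e1 : 'I_N -> rel V1) (e2 : 'I_N -> rel V2).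
Hypotheses (li1 : locinj e1) (li2 : locinj e2).
Variables (v1 : V1) (v2 : V2) (f1 : word N -> V1) (f2 : word N -> V2).
Hypotheses (hf1 : based_occ T1 e1 v1 f1) (hf2 : based_occ T2 e2 v2 f2).

Local Notation F := (fun x => (f1 x, f2 x)).
Local Notation E := (prod_edge e1 e2).

Lemma prod_edge_of_tree a x : x \in T -> rmul x (a, true) \in T ->
  E a (F x) (F (rmul x (a, true))).
Proof.
have [_ h1 _] := hf1; have [_ h2 _] := hf2.
rewrite !hcap => /andP [x1 x2] /andP [y1 y2].
by rewrite /prod_edge /= h1 ?h2 // /tedge ?x1 ?x2 ?y1 ?y2 eqxx.
Qed.

Lemma prod_edge_in_tree x : x \in T ->
  (forall a q, E a (F x) q -> rmul x (a, true) \in T) /\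
  (forall a q, E a q (F x) -> rmul x (a, false) \in T).
Proof.
move=> xT; have /andP [x1 x2] : (x \in T1) && (x \in T2) by rewrite -hcap.
have [o1 i1] := occ_edges_in_tree hT1 hf1 x1 (hTr xT).
have [o2 i2] := occ_edges_in_tree hT2 hf2 x2 (hTr xT).
split=> a [q1 q2] /andP [/= h1 h2]; rewrite hcap.
  by rewrite (o1 _ _ h1) (o2 _ _ h2).
by rewrite (i1 _ _ h1) (i2 _ _ h2).
Qed.

Lemma prod_edge_out a x q : x \in T -> E a (F x) q ->
  rmul x (a, true) \in T /\ q = F (rmul x (a, true)).
Proof.
move=> xT h; have xaT := (prod_edge_in_tree xT).1 a q h.
case: q h => q1 q2 /andP [/= h1 h2].
have /andP [/= g1 g2] := prod_edge_of_tree xT xaT.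
by split=> //; rewrite ((li1 a).1 _ _ _ h1 g1) ((li2 a).1 _ _ _ h2 g2).
Qed.

Lemma prod_edge_in a x q : x \in T -> E a q (F x) ->
  rmul x (a, false) \in T /\ q = F (rmul x (a, false)).
Proof.
move=> xT h; have xaT := (prod_edge_in_tree xT).2 a q h.
have := prod_edge_of_tree (a := a) xaT.
rewrite (rmulK_inv a (subtree1_reduced hT xT)) => /(_ xT) /andP [/= g1 g2].
case: q h => q1 q2 /andP [/= h1 h2].
by split=> //; rewrite ((li1 a).2 _ _ _ h1 g1) ((li2 a).2 _ _ _ h2 g2).
Qed.

Lemma prod_transports : transports T F.
Proof.
move=> u w [a b] uT wT eF uaT; case: b uaT => uaT.
  by move: (prod_edge_of_tree uT uaT); rewrite eF => /(prod_edge_out wT) [-> ->].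
have ua := prod_edge_of_tree (a := a) uaT.
rewrite (rmulK_inv a (subtree1_reduced hT uT)) eF in ua.
by have [waT ->] := prod_edge_in wT (ua uT).
Qed.

Lemma prod_inj : {in T &, injective F}.
Proof.
apply: transports_inj prod_transports => [t|t k]; [exact: subtree1_reduced | exact: subtree1_take].
Qed.

Lemma prod_adj_of_adjX x y : x \in T -> y \in T -> adjX x y -> prod_adj e1 e2 (F x) (F y).
Proof.
move=> xT yT /existsP [[a []] /eqP ey]; apply/existsP; exists a.
  by rewrite ey prod_edge_of_tree // -ey.
have := prod_edge_of_tree (a := a) yT.
by rewrite ey rmulK_inv ?(subtree1_reduced hT) // -ey orbC => ->.
Qed.

Lemma prod_adj_image p q : prod_adj e1 e2 p q -> p \in map F T -> q \in map F T.
Proof.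
case/existsP=> a /orP [h|h] /mapP [x xT ex]; subst p.
  by have [xaT ->] := prod_edge_out xT h; apply: map_f.
by have [xaT ->] := prod_edge_in xT h; apply: map_f.
Qed.

Lemma connect_prod_image p : connect (prod_adj e1 e2) (F [::]) p = (p \in map F T).
Proof.
have [nilT _ hpath] := hT.
apply/idP/idP.
  have closedT : closed (prod_adj e1 e2) [in map F T].
    by move=> u w huw; apply/idP/idP; apply: prod_adj_image; rewrite // prod_adj_sym.
  by move/(closed_connect closedT) <-; apply: map_f.
case/mapP=> x /hpath [s [ss <- sT]] ->; apply/connectP; exists (map F s); last by rewrite last_map.
elim: s [::] nilT ss sT => [|y s IH] z zT //= /andP [zy ss] /andP [yT sT].
by rewrite IH // andbT prod_adj_of_adjX.
Qed.

Lemma prod_edge_image a x y : x \in T -> y \in T ->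
  (y == rmul x (a, true)) = E a (F x) (F y).
Proof.
move=> xT yT; apply/eqP/idP => [ey | /(prod_edge_out xT) [xaT e]].
  by rewrite ey prod_edge_of_tree // -ey.
exact: prod_inj yT xaT e.
Qed.

End FiberProductComponent.

Theorem mainTheorem11 (N : nat) (hN : 2 <= N) (r : nat)
    (T T1 T2 : seq (word N))
    (hT : subtree1 T) (hTr : forall w, w \in T -> size w <= r)
    (hT1 : Rr r.+1 T1) (hT2 : Rr r.+1 T2)
    (hcap : forall w, (w \in T) = (w \in T1) && (w \in T2))
    (V1 V2 : finType) (e1 : 'I_N -> rel V1) (e2 : 'I_N -> rel V2)
    (hD1 : core_graph e1) (hD2 : core_graph e2)
    (v1 : V1) (v2 : V2) (f1 : word N -> V1) (f2 : word N -> V2)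
    (hf1 : based_occ T1 e1 v1 f1) (hf2 : based_occ T2 e2 v2 f2) :
  let F := fun x => (f1 x, f2 x) in
  [/\ {in T &, injective F},
      (forall p, connect (prod_adj e1 e2) (v1, v2) p <-> exists2 x, x \in T & p = F x) &
      (forall a x y, x \in T -> y \in T ->
         (y == rmul x (a, true)) = prod_edge e1 e2 a (F x) (F y))].
Proof.
have [[li1 _] [li2 _]] := (hD1, hD2).
have root : (f1 [::], f2 [::]) = (v1, v2) by case: hf1 => -> _ _; case: hf2 => -> _ _.
move=> F; split.
- exact (prod_inj hT hTr hT1 hT2 hcap li1 li2 hf1 hf2).
- move=> p; rewrite -root (connect_prod_image hT hTr hT1 hT2 hcap li1 li2 hf1 hf2).
  exact: (iff_sym (rwP mapP)).
- move=> a x y; exact: (prod_edge_image hT hTr hT1 hT2 hcap li1 li2 hf1 hf2).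
Qed.
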